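(* A digraph $D$ of order $n$ is minimally strong subgraph $(2,n-2)$-arc-connected if and only if $D$ is obtained from the complete digraph $\overleftrightarrow{K}_n$ by deleting an arc set $M$ such that $\overleftrightarrow{K}_n[M]$ is a union of vertex-disjoint cycles which cover all but at most one vertex of $\overleftrightarrow{K}_n$.
   Context: Digraphs are finite, without loops or parallel arcs; cycles are directed cycles, including 2-cycles. $\overleftrightarrow{K}_n$ is the complete digraph on $n$ vertices; $\overleftrightarrow{K}_n[M]$ is the subdigraph formed by the arcs of $M$ and their end-vertices. For $S\subseteq V(D)$, $\lambda_S(D)$ is the maximum number of pairwise arc-disjoint strong subgraphs of $D$ containing $S$, and $\lambda_k(D)=\min\{\lambda_S(D): S\subseteq V(D), |S|=k\}$. $D$ is minimally strong subgraph $(k,\ell)$-arc-connected if $\lambda_k(D)\ge\ell$ but $\lambda_k(D-e)\le \ell-1$ for every arc $e$ of $D$. *)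

From mathcomp Require Import all_boot.
Set Implicit Arguments. Unset Strict Implicit. Unset Printing Implicit Defensive.

(* A digraph on the finite vertex type T (vertex set = all of T, order #|T|)
   is given by its arc set D : {set T * T}; it is loopless when every arc
   (x, y) has x != y.  No parallel arcs by construction. *)

Section Digraphs.
Variable T : finType.

Definition complete_arcs : {set T * T} := [set p | p.1 != p.2].

Definition loopless (D : {set T * T}) : bool := D \subset complete_arcs.

Definition strong_sub_containing (D : {set T * T}) (S : {set T})
    (H : {set T} * {set T * T}) : bool :=
  let V := H.1 in let A := H.2 in
  [&& A \subset D,
      [forall p in A, (p.1 \in V) && (p.2 \in V)],
      S \subset V &
      [forall u in V, forall v in V, connect [rel x y | (x, y) \in A] u v]].

Definition packing (D : {set T * T}) (S : {set T}) (m : nat) : bool :=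
  [exists f : {ffun 'I_m -> {set T} * {set T * T}},
     [forall i, strong_sub_containing D S (f i)] &&
     [forall i, forall j, (i != j) ==> [disjoint (f i).2 & (f j).2]]].

(* For |S| >= 2 every such subgraph has an arc, so this number
   is at most #|T|^2 and the bound below is never reached. *)
Definition lambdaS (D : {set T * T}) (S : {set T}) : nat :=
  \max_(m < (#|T| ^ 2).+2 | packing D S m) m.

Definition lambdak (D : {set T * T}) (k : nat) : nat :=
  \big[minn/(#|T| ^ 2).+1]_(S : {set T} | #|S| == k) lambdaS D S.

(* minimally strong subgraph (k,l)-arc-connected; "lambda_k(D-e) <= l-1"
   is written as lambda_k(D-e) < l (integer reading). *)
Definition minimally_strong_arc_conn (D : {set T * T}) (k l : nat) : Prop :=
  l <= lambdak D k /\ forall e, e \in D -> lambdak (D :\ e) k < l.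

(* the arc set of a family C of cycles, each cycle a sequence of distinct
   vertices x_1 ... x_r (r >= 2) with arcs x_i -> x_{i+1} and x_r -> x_1 *)
Definition cycles_arcs (C : seq (seq T)) : {set T * T} :=
  [set p | has (fun c => (p.1 \in c) && (p.2 == next c p.1)) C].

Definition disjoint_cycles_cover_but_one (M : {set T * T}) : Prop :=
  exists C : seq (seq T),
    [/\ all (fun c => 2 <= size c) C,
        uniq (flatten C),
        M = cycles_arcs C &
        #|[set x | x \notin flatten C]| <= 1].

End Digraphs.

(* Write D = K_n - M.  If lambda_2(D) >= n - 2, every vertex has in- and
   out-degree at least n - 2 in D, since each of the arc-disjoint strong
   subgraphs through it and a second vertex uses its own arc at it; so M is a
   loopless partial injection.  Any maximal loopless partial injection is the
   set of arcs u -> f u (u != f u) of a permutation f with at most one fixed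
   point, i.e. the arc set of disjoint cycles covering all but at most one
   vertex.
   Conversely, for such an f, K_n minus these arcs contains n - 2 arc-disjoint
   strong subgraphs through any two vertices x, y.  By induction: delete a
   third vertex z, shortcut it in f, and build one more strong subgraph through
   x and y out of the arcs at z and the arc from the predecessor of z to its
   successor.  A suitable z exists unless f has no fixed point and every other
   vertex forms a 2-cycle with x or y; then n <= 4 and the subgraphs are
   given explicitly.
   Deleting an arc (u, v) lowers the out-degree of u, or the in-degree of v
   when u is the fixed point, to n - 3: this gives minimality.  And a minimal D
   has M maximal: an arc of the extension missing from M could be deleted from
   D while keeping lambda_2 >= n - 2. *)

From mathcomp Require Import all_boot zify perm.
Set Implicit Arguments. Unset Strict Implicit. Unset Printing Implicit Defensive.

Section Packings.
Variable T : finType.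
Implicit Types (D E : {set T * T}) (S : {set T}) (H : {set T} * {set T * T}).

Definition arc_rel (A : {set T * T}) : rel T := [rel u v | (u, v) \in A].
Definition outdeg D u := #|[set v | (u, v) \in D]|.
Definition indeg D v := #|[set u | (u, v) \in D]|.

Lemma strong_sub_containingS D E S H : D \subset E ->
  strong_sub_containing D S H -> strong_sub_containing E S H.
Proof.
by move=> sDE /and4P[sHD *]; apply/and4P; split=> //; apply: subset_trans sDE.
Qed.

Lemma packingS D E S m : D \subset E -> packing D S m -> packing E S m.
Proof.
move=> sDE /existsP[F /andP[/forallP strF djF]]; apply/existsP; exists F.
by rewrite djF andbT; apply/forallP=> i; apply: strong_sub_containingS (strF i).
Qed.

Lemma packing0 D S : packing D S 0.
Proof.
by apply/existsP; exists [ffun=> (set0, set0)]; apply/andP; split; apply/forallP=> -[].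
Qed.

Lemma packing_cons D E S m H : D \subset E -> packing D S m ->
  strong_sub_containing E S H -> [disjoint H.2 & D] -> packing E S m.+1.
Proof.
move=> sDE /existsP[F /andP[/forallP strF /forallP djF]] strH djH.
have djFH i : [disjoint (F i).2 & H.2].
  case/and4P: (strF i) => sFD _ _ _.
  by rewrite disjoint_sym; apply: disjointWr djH.
apply/existsP; exists [ffun i => if unlift ord0 i is Some j then F j else H].
apply/andP; split; apply/forallP=> i; rewrite ?ffunE.
  by case: unliftP => [j _|_] //; apply: strong_sub_containingS (strF j).
apply/forallP=> j; apply/implyP=> ij; rewrite !ffunE.
case: unliftP ij => [i' ->|->]; case: unliftP => [j' ->|->] //; rewrite ?eqxx //.
- by move=> ij; apply: (implyP (forallP (djF i') j')); apply: contra ij => /eqP->.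
- by rewrite disjoint_sym.
Qed.

Lemma lambdaS_ge D S m : m <= (#|T| ^ 2).+1 -> packing D S m -> m <= lambdaS D S.
Proof.
rewrite -ltnS => lt_m packm.
exact: (@leq_bigmax_cond _ (fun i : 'I__ => packing D S i) (fun i => i) (Ordinal lt_m)).
Qed.

Lemma lambdaS_le D S m : (forall i, packing D S i -> i <= m) -> lambdaS D S <= m.
Proof. by move=> le_m; apply/bigmax_leqP=> i /le_m. Qed.

Lemma bigmin_le (I : eqType) (r : seq I) (P : pred I) (F : I -> nat) idx i :
  i \in r -> P i -> \big[minn/idx]_(j <- r | P j) F j <= F i.
Proof.
elim: r => // j r IHr; rewrite inE big_cons => /orP[/eqP<- ->|ir Pi].
  exact: geq_minl.
by case: (P j); [apply: leq_trans (geq_minr _ _) _|]; apply: IHr.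
Qed.

Lemma lambdak_le D S k : #|S| = k -> lambdak D k <= lambdaS D S.
Proof. by move=> cardS; apply: bigmin_le; rewrite ?mem_index_enum ?cardS. Qed.

Lemma lambdak_ge D k m : m <= (#|T| ^ 2).+1 ->
  (forall S, #|S| = k -> m <= lambdaS D S) -> m <= lambdak D k.
Proof.
move=> le_m le_lambdaS; rewrite /lambdak; elim/big_ind: _ => //.
  by move=> a b; rewrite leq_min => -> ->.
by move=> S /eqP; apply: le_lambdaS.
Qed.

Lemma packing_le_card D S m (e : T -> T * T) :
  (forall H, strong_sub_containing D S H -> exists w, e w \in H.2) ->
  packing D S m -> m <= #|[set w | e w \in D]|.
Proof.
move=> arcH /existsP[F /andP[/forallP strF /forallP djF]].
pose g i := xchoose (arcH _ (strF i)).
have gF i : e (g i) \in (F i).2 := xchooseP (arcH _ (strF i)).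
have g_inj : injective g.
  move=> i j gij; apply/eqP; apply: contraLR isT => ij.
  have /disjointFr/(_ (gF i)) := implyP (forallP (djF i) j) ij.
  by rewrite gij gF.
rewrite -[m]card_ord -(card_imset _ g_inj); apply/subset_leq_card/subsetP.
move=> _ /imsetP[i _ ->]; rewrite inE.
by case/and4P: (strF i) => /subsetP sFD _ _ _; apply: sFD.
Qed.

Lemma connect_out_arc (A : {set T * T}) u v :
  u != v -> connect (arc_rel A) u v -> exists w, (u, w) \in A.
Proof.
move=> uv /connectP[[|w p] /= pth vE]; first by rewrite vE eqxx in uv.
by exists w; case/andP: pth.
Qed.

Lemma connect_in_arc (A : {set T * T}) u v :
  u != v -> connect (arc_rel A) u v -> exists w, (w, v) \in A.
Proof.
move=> uv /connectP[p pth vE]; case/lastP: p pth vE => [|p w] pth.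
  by move=> vE; rewrite vE eqxx in uv.
rewrite rcons_path last_rcons in pth * => ->.
by case/andP: pth => _ ?; exists (last u p).
Qed.

Lemma lambdak2_le_deg D x : 1 < #|T| ->
  lambdak D 2 <= outdeg D x /\ lambdak D 2 <= indeg D x.
Proof.
move=> nT; have [y yx] : exists y, y != x.
  have : 0 < #|[set~ x]| by rewrite cardsC1; lia.
  by case/card_gt0P => y; rewrite !inE; exists y.
have xS : x \in [set x; y] by rewrite !inE eqxx.
have yS : y \in [set x; y] by rewrite !inE eqxx orbT.
have le_lambda : lambdak D 2 <= lambdaS D [set x; y].
  by rewrite lambdak_le // cards2 eq_sym yx.
have conn H : strong_sub_containing D [set x; y] H ->
    connect (arc_rel H.2) x y /\ connect (arc_rel H.2) y x.
  case/and4P=> _ _ /subsetP sSV /forall_inP connH.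
  have [xV yV] := (sSV x xS, sSV y yS).
  by split; [apply: (forall_inP (connH x xV)) | apply: (forall_inP (connH y yV))].
split; apply: (leq_trans le_lambda); apply: lambdaS_le => m /packing_le_card; apply.
- by move=> H /conn[/(connect_out_arc _) + _]; apply; rewrite eq_sym.
- by move=> H /conn[_ /(connect_in_arc _)]; apply.
Qed.

End Packings.

Section CycleSubgraphs.
Variable T : finType.
Implicit Types (D E : {set T * T}) (S : {set T}) (c : seq T) (cs : seq (seq T)).

Fixpoint path_arcs (a : T) (s : seq T) : seq (T * T) :=
  if s is b :: s' then (a, b) :: path_arcs b s' else [::].

Definition cycle_arcs c : seq (T * T) :=
  if c is a :: s then path_arcs a (rcons s a) else [::].

Definition cycles_subgraph cs : {set T} * {set T * T} :=
  ([set v in flatten cs], [set p in flatten (map cycle_arcs cs)]).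

Definition cycles_meet_head cs :=
  if cs is c0 :: cs' then (c0 != [::]) && all (has (mem c0)) cs' else true.

Lemma path_arcsP (A : {set T * T}) a s :
  {subset path_arcs a s <= A} -> path (arc_rel A) a s.
Proof.
elim: s a => //= b s IHs a sA; apply/andP; split; first exact/sA/mem_head.
by apply: IHs => p ps; apply: sA; rewrite inE ps orbT.
Qed.

Lemma mem_path_arcs a s p : p \in path_arcs a s -> (p.1 \in a :: s) && (p.2 \in s).
Proof.
elim: s a => //= b s IHs a; rewrite inE => /orP[/eqP-> | /IHs]; first by rewrite !mem_head.
by case/andP; rewrite !inE => -> ->; rewrite !orbT.
Qed.

Lemma mem_cycle_arcs c p : p \in cycle_arcs c -> (p.1 \in c) && (p.2 \in c).
Proof.
case: c => //= a s /mem_path_arcs/andP[]; rewrite inE !mem_rcons => p1 ->.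
by case/orP: p1 => [/eqP->|->]; rewrite ?mem_head.
Qed.

Lemma cycles_subgraph_cycle cs c :
  c \in cs -> cycle (arc_rel (cycles_subgraph cs).2) c.
Proof.
case: c => //= a s cs_c; apply: path_arcsP => p p_c.
by rewrite inE; apply/flatten_mapP; exists (a :: s).
Qed.

Lemma cycles_subgraph_connect cs : cycles_meet_head cs ->
  {in flatten cs &, forall u v, connect (arc_rel (cycles_subgraph cs).2) u v}.
Proof.
case: cs => [|[//|h c0] cs] // /andP[_ /allP meet].
set e := arc_rel _.
have conn_in c : c \in (h :: c0) :: cs -> {in c &, forall u v, connect e u v}.
  by move=> cs_c; apply: connect_cycle; apply: cycles_subgraph_cycle.
have c0_in : h :: c0 \in (h :: c0) :: cs by rewrite mem_head.
have hc0 : h \in h :: c0 by rewrite mem_head.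
suff conn_h u : u \in flatten ((h :: c0) :: cs) -> connect e u h && connect e h u.
  move=> u v /conn_h/andP[uh _] /conn_h/andP[_ hv]; exact: connect_trans uh hv.
case/flattenP=> c; rewrite inE => /orP[/eqP-> | cs_c] uc.
  by rewrite !(conn_in _ c0_in).
have [w wc wc0] := hasP (meet c cs_c).
have c_in : c \in (h :: c0) :: cs by rewrite inE cs_c orbT.
apply/andP; split.
  exact: connect_trans (conn_in c c_in u w uc wc) (conn_in _ c0_in w h wc0 hc0).
exact: connect_trans (conn_in _ c0_in h w hc0 wc0) (conn_in c c_in w u wc uc).
Qed.

Lemma cycles_subgraph_strong D S cs : cycles_meet_head cs ->
  all (mem D) (flatten (map cycle_arcs cs)) -> S \subset [set v in flatten cs] ->
  strong_sub_containing D S (cycles_subgraph cs).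
Proof.
move=> meet /allP csD sSV; apply/and4P; split=> //.
- by apply/subsetP=> p; rewrite inE => /csD.
- apply/forall_inP=> p; rewrite !inE => /flatten_mapP[c cs_c /mem_cycle_arcs/andP[p1 p2]].
  by apply/andP; split; apply/flattenP; exists c.
- apply/forall_inP=> u; rewrite inE => u_cs; apply/forall_inP=> v; rewrite inE => v_cs.
  exact: cycles_subgraph_connect.
Qed.

Lemma packing_add_cycles D E S m cs : D \subset E -> packing D S m ->
  cycles_meet_head cs ->
  all (fun p => (p \in E) && (p \notin D)) (flatten (map cycle_arcs cs)) ->
  S \subset [set v in flatten cs] -> packing E S m.+1.
Proof.
move=> sDE packD meet csED sSV.
have {}csED p : p \in flatten (map cycle_arcs cs) -> (p \in E) && (p \notin D).
  exact: (allP csED).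
apply: (packing_cons (H := cycles_subgraph cs) sDE packD).
  apply: cycles_subgraph_strong => //.
  by apply/allP=> p /csED/andP[].
by rewrite disjoints_subset; apply/subsetP=> p; rewrite !inE => /csED/andP[].
Qed.

End CycleSubgraphs.

Arguments cycle_arcs {T} c.

Section CoFunctionalDigraphs.
Variable T : finType.
Implicit Types (W : {set T}) (f g : T -> T).

Definition permutes W f := {in W, forall u, f u \in W} /\ {in W &, injective f}.

Definition compl_fun_arcs W f : {set T * T} :=
  [set p | [&& p.1 \in W, p.2 \in W, p.1 != p.2 & f p.1 != p.2]].

(* Shortcut z out of its cycle: the predecessor of z is sent to f z. *)
Definition bypass f z u := if f u == z then f z else f u.

Lemma in_compl_fun_arcs W f u v :
  ((u, v) \in compl_fun_arcs W f) = [&& u \in W, v \in W, u != v & f u != v].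
Proof. by rewrite inE. Qed.

Lemma permutes_neq W f u v : permutes W f -> u \in W -> v \in W -> u != v -> f u != f v.
Proof. by case=> _ f_inj uW vW; apply: contra => /eqP/f_inj->. Qed.

Lemma permutes_preimage W f z : permutes W f -> z \in W -> exists2 p, p \in W & f p = z.
Proof.
case=> fW f_inj zW; have fWW : f @: W = W.
  apply/eqP; rewrite eqEcard card_in_imset // leqnn andbT.
  by apply/subsetP=> _ /imsetP[u uW ->]; apply: fW.
by move: zW; rewrite -{1}fWW => /imsetP[p pW ->]; exists p.
Qed.

Lemma permutes_comp W f g : permutes W f -> permutes W g -> permutes W (f \o g).
Proof.
move=> [fW f_inj] [gW g_inj]; split=> [u uW | u v uW vW /f_inj]; first exact/fW/gW.
by move=> /(_ (gW u uW) (gW v vW)); apply: g_inj.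
Qed.

Lemma permutes_tperm W a b : a \in W -> b \in W -> permutes W (tperm a b).
Proof.
move=> aW bW; split=> [u uW|u v _ _]; last exact: perm_inj.
by case: tpermP => // ->.
Qed.

Lemma permutes_bypass W f z : permutes W f -> z \in W -> permutes (W :\ z) (bypass f z).
Proof.
move=> [fW f_inj] zW.
have fK u v : u \in W -> v \in W -> f u = f v -> u = v by move=> uW vW; apply: f_inj.
split=> [u | u v]; rewrite !in_setD1 /bypass.
  case/andP=> uz uW; case: (eqVneq (f u) z) => fuz; rewrite fW ?andbT //.
  by apply: contra uz => /eqP fzz; apply/eqP/fK; rewrite ?fuz.
case/andP=> uz uW /andP[vz vW].
case: (eqVneq (f u) z) => fuz; case: (eqVneq (f v) z) => fvz.
- by move=> _; apply: fK; rewrite ?fuz.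
- by move/fK=> /(_ zW vW) vE; rewrite vE eqxx in vz.
- by move/esym/fK=> /(_ zW uW) uE; rewrite uE eqxx in uz.
- exact: fK.
Qed.

Lemma compl_bypass_sub W f z :
  compl_fun_arcs (W :\ z) (bypass f z) \subset compl_fun_arcs W f.
Proof.
apply/subsetP=> -[u v]; rewrite !in_compl_fun_arcs !in_setD1 /bypass.
case/and4P=> /andP[_ ->] /andP[vz ->] -> /=.
by case: (eqVneq (f u) z) => [-> _|//]; rewrite eq_sym.
Qed.

Lemma compl_bypass_tperm_sub W f z a b : f a = z -> f b = b ->
  compl_fun_arcs (W :\ z) (bypass f z \o tperm a b) \subset compl_fun_arcs W f.
Proof.
move=> fa fb; apply/subsetP=> -[u v]; rewrite !in_compl_fun_arcs !in_setD1 /=.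
case/and4P=> /andP[_ ->] /andP[vz ->] uv; rewrite uv /=.
case: (tpermP a b u) => [-> _ | ub _ | _ _]; first by rewrite fa eq_sym.
  by rewrite ub fb -ub.
by rewrite /bypass; case: (eqVneq (f u) z) => [-> _|//]; rewrite eq_sym.
Qed.

Lemma exists_notin (A : {set T}) (s : seq T) :
  size s < #|A| -> exists2 u, u \in A & u \notin s.
Proof.
move=> lt_s; apply/exists_inP; apply: contraTT lt_s => /exists_inPn As.
rewrite -leqNgt (leq_trans _ (card_size s)) //.
by apply/subset_leq_card/subsetP=> u /As/negPn.
Qed.

End CoFunctionalDigraphs.

Ltac mem_ok := by rewrite /= ?inE ?eqxx ?orTb ?orbT.

Ltac split_arcs :=
  rewrite /= ?eqxx ?andbF ?andbT /=; repeat (apply/andP; split); by [|rewrite eq_sym].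

(* The arcs of compl_fun_arcs W f missing from compl_fun_arcs (W :\ z) (bypass f z)
   are the arcs at z and the arc from the predecessor of z to f z.  One more strong
   subgraph through x and y is built from them, by cases on f z and on the
   predecessor of z. *)
Section ExtensionStep.
Variables (T : finType) (W : {set T}) (f : T -> T) (z x y : T) (k : nat).
Hypotheses (f_perm : permutes W f) (zW : z \in W) (xW : x \in W) (yW : y \in W).
Hypotheses (xy : x != y) (zx : z != x) (zy : z != y).
Hypothesis IHz : forall g, permutes (W :\ z) g ->
  packing (compl_fun_arcs (W :\ z) g) [set x; y] k.

Let D := compl_fun_arcs W f.

Let extend_by_cycles g cs : permutes (W :\ z) g ->
  compl_fun_arcs (W :\ z) g \subset D -> cycles_meet_head cs ->
  all (fun p => (p \in D) && (p \notin compl_fun_arcs (W :\ z) g))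
      (flatten (map cycle_arcs cs)) ->
  x \in flatten cs -> y \in flatten cs -> packing D [set x; y] k.+1.
Proof.
move=> g_perm sub meet arcs xcs ycs.
apply: (packing_add_cycles sub (IHz g_perm) meet arcs).
by apply/subsetP=> v; rewrite !inE => /orP[]/eqP->.
Qed.

Let extend_by_bypass cs : cycles_meet_head cs ->
  all (fun p => (p \in D) && (p \notin compl_fun_arcs (W :\ z) (bypass f z)))
      (flatten (map cycle_arcs cs)) ->
  x \in flatten cs -> y \in flatten cs -> packing D [set x; y] k.+1.
Proof. exact: extend_by_cycles (permutes_bypass f_perm zW) (compl_bypass_sub W f z). Qed.

Lemma packing_step_generic : f x != z -> f y != z -> f z != x -> f z != y ->
  packing D [set x; y] k.+1.
Proof.
move=> fx fy fzx fzy.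
apply: (extend_by_bypass (cs := [:: [:: x; z]; [:: y; z]])); rewrite /D; last 2 first.
- mem_ok.
- mem_ok.
- mem_ok.
- rewrite /= !in_compl_fun_arcs !in_setD1; split_arcs.
Qed.

Lemma packing_step_succ_pred : f z = x -> f y = z -> packing D [set x; y] k.+1.
Proof.
move=> fz fy; have fx : f x != z by rewrite -fy (permutes_neq f_perm xW yW).
apply: (extend_by_bypass (cs := [:: [:: x; z; y]])); rewrite /D; last 2 first.
- mem_ok.
- mem_ok.
- by [].
- rewrite /= !in_compl_fun_arcs !in_setD1 /bypass fy fz; split_arcs.
Qed.

Lemma packing_step_succ_out p : p \in W -> p != x -> p != y -> f z = x -> f p = z ->
  packing D [set x; y] k.+1.
Proof.
move=> pW px py fz fp.
have fx : f x != z by rewrite -fp (permutes_neq f_perm xW pW) // eq_sym.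
have fy : f y != z by rewrite -fp (permutes_neq f_perm yW pW) // eq_sym.
have pz : p != z by apply: contraNneq zx => pz; rewrite -fz -pz fp pz.
apply: (extend_by_bypass (cs := [:: [:: x; z; p]; [:: y; z]])); rewrite /D; last 2 first.
- mem_ok.
- mem_ok.
- mem_ok.
- rewrite /= !in_compl_fun_arcs !in_setD1 /bypass fp fz; split_arcs.
Qed.

Lemma packing_step_pred : f x = z -> f z != x -> f z != y -> packing D [set x; y] k.+1.
Proof.
move=> fx fzx fzy; have fzW : f z \in W by apply: f_perm.1.
have fy : f y != z by rewrite -fx (permutes_neq f_perm yW xW) // eq_sym.
have ffz : f (f z) != z by rewrite -{2}fx (permutes_neq f_perm fzW xW).
have fzz : f z != z.
  by apply: contraNneq zx => fzz; apply/eqP/(f_perm.2 z x) => //; rewrite fx fzz.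
apply: (extend_by_bypass (cs := [:: [:: x; f z; z]; [:: y; z]])); rewrite /D; last 2 first.
- mem_ok.
- mem_ok.
- mem_ok.
- rewrite /= !in_compl_fun_arcs !in_setD1 /bypass fx; split_arcs.
Qed.

(* x and z form a 2-cycle, so no new arc joins them; recurse instead on the
   bypass composed with the swap of x and the fixed point u, which frees the two
   arcs between x and u. *)
Lemma packing_step_2cycle u : u \in W -> f z = x -> f x = z -> f u = u ->
  packing D [set x; y] k.+1.
Proof.
move=> uW fz fx fu.
have fy : f y != z by rewrite -fx (permutes_neq f_perm yW xW) // eq_sym.
have uz : u != z by apply: contraNneq zx => uz; rewrite -fz -uz fu uz.
have ux : u != x by apply: contraNneq zx => ux; rewrite -fx -ux fu ux.
have g_perm : permutes (W :\ z) (bypass f z \o tperm x u).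
  apply: permutes_comp; first exact: permutes_bypass.
  by apply: permutes_tperm; rewrite in_setD1 ?xW ?uW ?uz ?andbT // eq_sym.
apply: (extend_by_cycles (cs := [:: [:: u; z]; [:: x; u]; [:: y; z]]) g_perm);
  rewrite /D; last 2 first.
- mem_ok.
- mem_ok.
- exact: compl_bypass_tperm_sub.
- mem_ok.
- rewrite /= !in_compl_fun_arcs !in_setD1 /= tpermL tpermR /bypass fu fx fz (negbTE uz).
  split_arcs.
Qed.

Lemma packing_step_succ : f z = x -> (f x = z -> exists2 u, u \in W & f u = u) ->
  packing D [set x; y] k.+1.
Proof.
move=> fz fixf; have [p pW fp] := permutes_preimage f_perm zW.
case: (eqVneq p x) => [px | px].
  by subst p; have [u uW fu] := fixf fp; apply: packing_step_2cycle fu.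
case: (eqVneq p y) => [py | py]; first by subst p; apply: packing_step_succ_pred.
exact: packing_step_succ_out pW px py fz fp.
Qed.

End ExtensionStep.

Section LowerBound.
Variable T : finType.
Implicit Types (W : {set T}) (f g : T -> T).

Lemma packing_step W f z x y k : permutes W f -> z \in W -> x \in W -> y \in W ->
  x != y -> z != x -> z != y ->
  ((f z == x) || (f z == y) -> f (f z) = z -> exists2 u, u \in W & f u = u) ->
  (forall g, permutes (W :\ z) g -> packing (compl_fun_arcs (W :\ z) g) [set x; y] k) ->
  packing (compl_fun_arcs W f) [set x; y] k.+1.
Proof.
move=> f_perm zW xW yW xy zx zy fixf IHz.
have IHz' g : permutes (W :\ z) g -> packing (compl_fun_arcs (W :\ z) g) [set y; x] k.
  by rewrite setUC; apply: IHz.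
have yx : y != x by rewrite eq_sym.
case: (eqVneq (f z) x) => [fzx | fzx].
  apply: (packing_step_succ (z := z)) => // fx; by apply: fixf; rewrite fzx ?fx ?eqxx.
case: (eqVneq (f z) y) => [fzy | fzy].
  rewrite setUC; apply: (packing_step_succ (z := z)) => // fy.
  by apply: fixf; rewrite fzy ?fy ?eqxx ?orbT.
have [p pW fp] := permutes_preimage f_perm zW.
case: (eqVneq p x) => [px | px]; first by subst p; apply: (packing_step_pred (z := z)).
case: (eqVneq p y) => [py | py].
  by subst p; rewrite setUC; apply: (packing_step_pred (z := z)).
apply: (packing_step_generic (z := z)) => //.
  by rewrite -fp (permutes_neq f_perm xW pW) // eq_sym.
by rewrite -fp (permutes_neq f_perm yW pW) // eq_sym.
Qed.

(* Every vertex but x and y forms a 2-cycle with x or y, hence #|W| <= 4. *)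
Lemma packing_paired_2cycles W f x y z0 k : permutes W f -> #|W| = k.+3 ->
  x \in W -> y \in W -> z0 \in W -> x != y -> z0 != x -> z0 != y ->
  f z0 = x -> f x = z0 -> {in W, forall z, z != x -> z != y -> (f z == x) || (f z == y)} ->
  packing (compl_fun_arcs W f) [set x; y] k.+1.
Proof.
move=> f_perm cardW xW yW z0W xy z0x z0y fz0 fx paired.
have fy : f y != x by rewrite -fz0 (permutes_neq f_perm yW z0W) // eq_sym.
have fK u v : u \in W -> v \in W -> f u = f v -> u = v by apply: f_perm.2.
have pack_xy (E : {set T * T}) : (x, y) \in E -> (y, x) \in E -> packing E [set x; y] 1.
  move=> xyE yxE; apply: (packing_add_cycles (sub0set E) (packing0 _ _)
    (cs := [:: [:: x; y]])) => //=; first by rewrite xyE yxE !inE.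
  by apply/subsetP=> v; rewrite !inE.
case: k cardW => [|k] cardW.
  by apply: pack_xy; rewrite in_compl_fun_arcs ?fx; split_arcs.
have [z1 z1W] : exists2 z1, z1 \in W & z1 \notin [:: x; y; z0].
  by apply: exists_notin; rewrite cardW.
rewrite !inE !negb_or => /and3P[z1x z1y z1z0].
have fz1 : f z1 = y.
  have /orP[/eqP fz1x|/eqP //] := paired z1 z1W z1x z1y.
  by move/eqP: z1z0; case; apply: fK; rewrite ?fz0.
case: k cardW => [|k] cardW; last first.
  have [z2 z2W] : exists2 z2, z2 \in W & z2 \notin [:: x; y; z0; z1].
    by apply: exists_notin; rewrite cardW.
  rewrite !inE !negb_or => /and4P[z2x z2y z2z0 z2z1].
  case/orP: (paired z2 z2W z2x z2y) => /eqP fz2.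
    by move/eqP: z2z0; case; apply: fK; rewrite ?fz0.
  by move/eqP: z2z1; case; apply: fK; rewrite ?fz1.
have fyz0 : f y != z0 by rewrite -fx (permutes_neq f_perm yW xW) // eq_sym.
apply: (packing_add_cycles _ (pack_xy [set (x, y); (y, x)] _ _)
  (cs := [:: [:: z1; z0]; [:: x; z1]; [:: z0; y]])); rewrite ?inE ?eqxx ?orbT //.
- by apply/subsetP=> p; rewrite !inE => /orP[] /eqP->; rewrite /= ?fx; split_arcs.
- mem_ok.
- rewrite /= !in_compl_fun_arcs !inE !xpair_eqE (negbTE z1x) (negbTE z1y) (negbTE z0x).
  rewrite (negbTE z0y) fz1 fz0 fx; split_arcs.
- by apply/subsetP=> v; rewrite !inE => /orP[]/eqP->; mem_ok.
Qed.

Lemma packing_compl_fun_arcs k W f x y : #|W| = k.+2 -> permutes W f ->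
  x \in W -> y \in W -> x != y -> packing (compl_fun_arcs W f) [set x; y] k.
Proof.
elim: k W f => [|k IHk] W f cardW f_perm xW yW xy; first exact: packing0.
have IHz z : z \in W -> z != x -> z != y -> forall g, permutes (W :\ z) g ->
    packing (compl_fun_arcs (W :\ z) g) [set x; y] k.
  move=> zW zx zy g g_perm; apply: IHk => //; rewrite ?in_setD1 1?eq_sym ?zx ?zy //.
  by move: (cardsD1 z W); rewrite zW cardW => -[].
pose paired z := ((f z == x) || (f z == y)) && (f (f z) == z).
pose has_fixpoint := [exists u in W, f u == u].
have [z /and4P[zW zx zy z_ok] | all_paired] :=
  pickP [pred v | [&& v \in W, v != x, v != y & ~~ paired v || has_fixpoint]].
  apply: (packing_step f_perm zW xW yW xy zx zy _ (IHz z zW zx zy)) => fz ffz.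
  move: z_ok; rewrite /paired fz ffz eqxx /= => /exists_inP[u uW /eqP fu].
  by exists u.
have paired_out z : z \in W -> z != x -> z != y -> paired z && ~~ has_fixpoint.
  move=> zW zx zy; move: (all_paired z); rewrite /= zW zx zy /= => /negbT.
  by rewrite negb_or negbK.
have [z0 z0W] : exists2 z0, z0 \in W & z0 \notin [:: x; y].
  by apply: exists_notin; rewrite cardW.
rewrite !inE negb_or => /andP[z0x z0y].
have /andP[/andP[fz0 /eqP ffz0] _] := paired_out z0 z0W z0x z0y.
have fzxy : {in W, forall z, z != x -> z != y -> (f z == x) || (f z == y)}.
  by move=> z zW zx zy; case/andP: (paired_out z zW zx zy) => /andP[].
case/orP: fz0 => /eqP fz0; rewrite fz0 in ffz0.
  exact: packing_paired_2cycles f_perm cardW xW yW z0W xy z0x z0y fz0 ffz0 fzxy.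
rewrite setUC; apply: (packing_paired_2cycles f_perm cardW yW xW z0W _ z0y z0x fz0 ffz0).
  by rewrite eq_sym.
by move=> z zW zy zx; rewrite orbC; apply: fzxy.
Qed.
End LowerBound.

Section FunctionalArcs.
Variable T : finType.
Implicit Types (f : T -> T) (c : seq T) (C : seq (seq T)).

Definition fun_arcs f : {set T * T} := [set p | (f p.1 == p.2) && (p.1 != p.2)].

Definition at_most_one_fixpoint f := forall u v, f u = u -> f v = v -> u = v.

Lemma compl_fun_arcsT f : complete_arcs T :\: fun_arcs f = compl_fun_arcs setT f.
Proof. by apply/setP=> -[u v]; rewrite !inE /=; case: (u != v); case: (f u == v). Qed.

Definition on_cycles (h : seq T -> T -> T) C u :=
  foldr (fun c r => if u \in c then h c u else r) u C.

Lemma on_cycles_in h C c u :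
  uniq (flatten C) -> c \in C -> u \in c -> on_cycles h C u = h c u.
Proof.
elim: C => //= c0 C IHC; rewrite cat_uniq inE => /and3P[_ c0C uniqC].
case/orP=> [/eqP-> -> // | cC uc].
have -> : (u \in c0) = false.
  by apply: contraNF c0C => uc0; apply/hasP; exists u => //; apply/flattenP; exists c.
exact: IHC.
Qed.

Lemma on_cycles_out h C u : u \notin flatten C -> on_cycles h C u = u.
Proof. by elim: C => //= c C IHC; rewrite mem_cat negb_or => /andP[/negbTE-> /IHC]. Qed.

Lemma uniq_flatten_mem C c : uniq (flatten C) -> c \in C -> uniq c.
Proof.
elim: C => //= c0 C IHC; rewrite cat_uniq inE => /and3P[uc0 _ uC].
by case/orP=> [/eqP->|/IHC]; last apply.
Qed.

Lemma next_neq c u : uniq c -> 1 < size c -> u \in c -> next c u != u.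
Proof.
move=> uc size_c cu; have [i q cE] := rot_to cu.
rewrite -(next_rot i uc) cE.
have : uniq (u :: q) by rewrite -cE rot_uniq.
have : 0 < size q by move: size_c; rewrite -(size_rot i) cE.
by case: q {cE} => [//|w q] _ /=; rewrite eqxx inE negb_or eq_sym => /andP[/andP[]].
Qed.

Lemma cycles_arcs_fun C : all (fun c => 1 < size c) C -> uniq (flatten C) ->
  #|[set u | u \notin flatten C]| <= 1 ->
  exists f, [/\ injective f, at_most_one_fixpoint f & cycles_arcs C = fun_arcs f].
Proof.
move=> /allP sizeC uniqC cover; pose f := on_cycles next C.
have f_in c u : c \in C -> u \in c -> f u = next c u := on_cycles_in next uniqC.
have f_moves u : u \in flatten C -> f u != u.
  case/flattenP=> c cC uc; rewrite (f_in c) // next_neq //; last exact: sizeC.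
  exact: uniq_flatten_mem uniqC cC.
have fK : cancel f (on_cycles prev C).
  move=> u; case: (boolP (u \in flatten C)) => [/flattenP[c cC uc] | uC].
    have uniq_c := uniq_flatten_mem uniqC cC.
    by rewrite (f_in c) // (on_cycles_in _ uniqC cC) ?mem_next // prev_next.
  by rewrite [f u]on_cycles_out // on_cycles_out.
exists f; split; first exact: can_inj fK.
  move=> u v fu fv; apply: esym; apply: (card_le1_eqP cover); rewrite inE;
    by apply/negP=> /f_moves; rewrite ?fu ?fv eqxx.
apply/setP=> -[u v]; rewrite !inE /=.
apply/hasP/andP => [[c cC /andP[uc /eqP->]] | [/eqP<- fu]].
  by rewrite -(f_in c) // eqxx eq_sym f_moves //; apply/flattenP; exists c.
have /flattenP[c cC uc] : u \in flatten C.
  by apply: contraNT fu => /(on_cycles_out next) fu; rewrite /f fu.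
by exists c; rewrite // uc (f_in c) // eqxx.
Qed.

Lemma uniq_flatten_map (I : eqType) (g : I -> seq T) (s : seq I) : uniq s ->
  {in s, forall i, uniq (g i)} ->
  {in s &, forall i j, i != j -> ~~ has (mem (g i)) (g j)} ->
  uniq (flatten (map g s)).
Proof.
elim: s => //= i s IHs /andP[si uniq_s] uniq_g disj_g.
rewrite cat_uniq uniq_g ?mem_head //= IHs //; first last.
- by move=> j k js ks; apply: disj_g; rewrite inE ?js ?ks orbT.
- by move=> j js; apply: uniq_g; rewrite inE js orbT.
rewrite andbT; apply/hasP=> -[w /flatten_mapP[j js wj] wi].
have ij : i != j by apply: contraNneq si => ->.
have sj : j \in i :: s by rewrite inE js orbT.
have /negP[] := disj_g i j (mem_head _ _) sj ij.
by apply/hasP; exists w.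
Qed.

Lemma size_gt1 (s : seq T) a b : a \in s -> b \in s -> a != b -> 1 < size s.
Proof. by case: s => [|c [|d s]] //=; rewrite !inE => /eqP-> /eqP->; rewrite eqxx. Qed.

Section Orbits.
Variable f : T -> T.
Hypothesis f_inj : injective f.
Let fconnect_symf := fconnect_sym f_inj.

Definition moving_roots := enum [pred r | (froot f r == r) && (f r != r)].

Lemma fconnect_fixed r u : f r = r -> fconnect f r u -> u = r.
Proof. by move=> fr; rewrite fconnect_orbit => /trajectP[i _ ->]; apply: iter_fix. Qed.

Lemma moving_roots_froot u : f u != u -> froot f u \in moving_roots.
Proof.
move=> fu; rewrite mem_enum inE (root_root fconnect_symf) eqxx /=.
apply: contra fu => /eqP fr; apply/eqP.
suff -> : u = froot f u by [].
by apply: fconnect_fixed; rewrite // fconnect_symf connect_root.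
Qed.

Lemma mem_flatten_orbits u : (u \in flatten (map (orbit f) moving_roots)) = (f u != u).
Proof.
apply/flatten_mapP/idP => [[r] | fu]; last first.
  exists (froot f u); first exact: moving_roots_froot.
  by rewrite -fconnect_orbit fconnect_symf connect_root.
rewrite mem_enum inE -fconnect_orbit => /andP[_ fr] ru.
apply: contra fr => /eqP fu; apply/eqP.
have ur : fconnect f u r by rewrite fconnect_symf.
by rewrite (fconnect_fixed fu ur).
Qed.

Lemma fun_arcs_cycles : at_most_one_fixpoint f ->
  exists C, [/\ all (fun c => 1 < size c) C, uniq (flatten C),
                fun_arcs f = cycles_arcs C & #|[set u | u \notin flatten C]| <= 1].
Proof.
move=> f1; exists (map (orbit f) moving_roots); split.
- apply/allP=> c /mapP[r]; rewrite mem_enum inE => /andP[_ fr] ->.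
  apply: (size_gt1 (b := f r) (in_orbit f r)); last by rewrite eq_sym.
  by rewrite -fconnect_orbit fconnect1.
- apply: uniq_flatten_map => [|r _|r1 r2]; rewrite ?enum_uniq ?orbit_uniq //.
  rewrite !mem_enum !inE => /andP[/eqP r1E _] /andP[/eqP r2E _] r12.
  apply/hasP=> -[w r2w r1w]; case/eqP: r12.
  rewrite -r1E -r2E; apply/(rootP fconnect_symf).
  apply: (connect_trans (y := w)); first by rewrite fconnect_orbit.
  by rewrite fconnect_symf fconnect_orbit.
- apply/setP=> -[u v]; rewrite !inE /= has_map; apply/andP/hasP => [[/eqP<- fu] | [r]].
    have ru : u \in orbit f (froot f u).
      by rewrite -fconnect_orbit fconnect_symf connect_root.
    exists (froot f u); first by apply: moving_roots_froot; rewrite eq_sym.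
    by rewrite /= ru (nextE (cycle_orbit f_inj _) ru) eqxx.
  move=> rR /andP[ru /eqP->]; rewrite (nextE (cycle_orbit f_inj _) ru) eqxx eq_sym.
  by split; rewrite // -mem_flatten_orbits; apply/flatten_mapP; exists r.
- apply/card_le1_eqP=> u v; rewrite !inE !mem_flatten_orbits !negbK => /eqP fu /eqP fv.
  exact: f1.
Qed.

End Orbits.

End FunctionalArcs.

Section PartialInjections.
Variable T : finType.
Implicit Types (M N : {set T * T}) (A B : {set T}).

Definition partial_injection N :=
  [&& loopless N, [forall u, outdeg N u <= 1] & [forall v, indeg N v <= 1]].

Definition sources N := [set p.1 | p in N].
Definition targets N := [set p.2 | p in N].

Lemma partial_injectionP N : reflect
  [/\ loopless N, forall u v v', (u, v) \in N -> (u, v') \in N -> v = v'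
    & forall u u' v, (u, v) \in N -> (u', v) \in N -> u = u']
  (partial_injection N).
Proof.
apply: (iffP and3P) => [[lN /forallP outN /forallP inN] | [lN outN inN]]; split=> //.
- by move=> u v v' uv uv'; apply: esym; apply: (card_le1_eqP (outN u)); rewrite inE.
- by move=> u u' v uv u'v; apply: esym; apply: (card_le1_eqP (inN v)); rewrite inE.
- apply/forallP=> u; apply/card_le1_eqP=> v v'; rewrite !inE => uv uv'.
  exact: outN uv' uv.
- apply/forallP=> v; apply/card_le1_eqP=> u u'; rewrite !inE => uv u'v.
  exact: inN u'v uv.
Qed.

Lemma sourcesP N u : reflect (exists v, (u, v) \in N) (u \in sources N).
Proof.
by apply: (iffP imsetP) => [[[a b] abN ->] | [v uvN]]; [exists b | exists (u, v)].
Qed.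

Lemma targetsP N v : reflect (exists u, (u, v) \in N) (v \in targets N).
Proof.
by apply: (iffP imsetP) => [[[a b] abN ->] | [u uvN]]; [exists a | exists (u, v)].
Qed.

Lemma card_sources N : partial_injection N -> #|sources N| = #|N|.
Proof.
case/partial_injectionP=> _ outN _.
apply: card_in_imset => -[u v] [u' v'] /= uvN + uu'; rewrite -uu' => u'v'N.
by rewrite (outN _ _ _ uvN u'v'N).
Qed.

Lemma card_targets N : partial_injection N -> #|targets N| = #|N|.
Proof.
case/partial_injectionP=> _ _ inN.
apply: card_in_imset => -[u v] [u' v'] /= uvN + vv'; rewrite -vv' => u'v'N.
by rewrite (inN _ _ _ uvN u'v'N).
Qed.

Lemma subset_setC_card_eq A B : #|A| = #|B| ->
  {in ~: A & ~: B, forall u v, u = v} -> {subset ~: A <= ~: B}.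
Proof.
move=> cardAB eqAB u uA; have : 0 < #|~: B|.
  have : 0 < #|~: A| by apply/card_gt0P; exists u.
  by have := cardsC A; have := cardsC B; lia.
by case/card_gt0P=> v vB; rewrite (eqAB u v).
Qed.

Lemma sources_eq_targets N : partial_injection N ->
  {in ~: sources N & ~: targets N, forall u v, u = v} -> sources N = targets N.
Proof.
move=> pN ends.
have cardST : #|sources N| = #|targets N| by rewrite card_sources ?card_targets.
apply/setP=> u; apply/idP/idP; apply: contraLR; rewrite -!in_setC.
  by apply: subset_setC_card_eq => // v w vT wS; apply/esym/ends.
exact: subset_setC_card_eq.
Qed.

Lemma partial_injection_fun N : partial_injection N ->
  {in ~: sources N & ~: targets N, forall u v, u = v} ->
  exists f, [/\ injective f, at_most_one_fixpoint f & N \subset fun_arcs f].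
Proof.
move=> pN ends; have ST := sources_eq_targets pN ends.
case/partial_injectionP: pN => /subsetP lN outN inN.
pose f u := odflt u [pick v | (u, v) \in N].
have f_arc u : u \in sources N -> (u, f u) \in N.
  by case/sourcesP=> v uvN; rewrite /f; case: pickP => [//|/(_ v)]; rewrite uvN.
have f_id u : u \notin sources N -> f u = u.
  move=> uS; rewrite /f; case: pickP => [v uvN|//].
  by case/negP: uS; apply/sourcesP; exists v.
have f_sources u : u \in sources N -> f u \in sources N.
  by move/f_arc=> ufN; rewrite ST; apply/targetsP; exists u.
have f_inj : injective f.
  move=> u v; case: (boolP (u \in sources N)) => uS;
    case: (boolP (v \in sources N)) => vS fuv.
  - by apply: inN (f_arc u uS) _; rewrite fuv f_arc.
  - by move: (f_sources u uS); rewrite fuv f_id // (negbTE vS).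
  - by move: (f_sources v vS); rewrite -fuv f_id // (negbTE uS).
  - by rewrite -(f_id u uS) fuv f_id.
have fixed_notin u : f u = u -> u \notin sources N.
  by move=> fu; apply/negP=> /f_arc; rewrite fu => /lN; rewrite inE eqxx.
exists f; split=> //.
  by move=> u v /fixed_notin uS /fixed_notin; rewrite ST => vT; apply: ends; rewrite inE.
apply/subsetP=> -[u v] uvN; have uS : u \in sources N by apply/sourcesP; exists v.
rewrite inE /= (outN _ _ _ (f_arc u uS) uvN) eqxx /=.
by have := lN _ uvN; rewrite inE.
Qed.

Lemma partial_injection_setU1 N u v : partial_injection N -> u != v ->
  u \notin sources N -> v \notin targets N -> partial_injection ((u, v) |: N).
Proof.
case/partial_injectionP=> lN outN inN uv uS vT.
have uN w : (u, w) \notin N by apply: contra uS => uwN; apply/sourcesP; exists w.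
have Nv w : (w, v) \notin N by apply: contra vT => wvN; apply/targetsP; exists w.
apply/partial_injectionP; split.
- by apply/subsetP=> p; rewrite in_setU1 => /orP[/eqP-> | /(subsetP lN)]; rewrite ?inE.
- move=> a b b'; rewrite !in_setU1 !xpair_eqE.
  case/orP=> [/andP[/eqP-> /eqP->] | abN]; case/orP=> [/andP[/eqP aE /eqP->] | ab'N] //.
  + by rewrite (negbTE (uN b')) in ab'N.
  + by rewrite aE (negbTE (uN b)) in abN.
  + exact: outN abN ab'N.
- move=> a a' b; rewrite !in_setU1 !xpair_eqE.
  case/orP=> [/andP[/eqP-> /eqP->] | abN]; case/orP=> [/andP[/eqP-> /eqP bE] | a'bN] //.
  + by rewrite (negbTE (Nv a')) in a'bN.
  + by rewrite bE (negbTE (Nv a)) in abN.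
  + exact: inN abN a'bN.
Qed.

(* In a maximal extension, a vertex without out-arc and a vertex without in-arc
   coincide, otherwise the arc joining them could be added. *)
Lemma partial_injection_extend M : partial_injection M ->
  exists f, [/\ injective f, at_most_one_fixpoint f & M \subset fun_arcs f].
Proof.
move=> pM; have pMM : partial_injection M && (M \subset M) by rewrite pM subxx.
have [N /andP[pN sMN] maxN] :=
  @arg_maxnP _ M [pred N | partial_injection N && (M \subset N)] (fun N => #|N|) pMM.
suff [f [f_inj f1 sNf]] : exists f,
    [/\ injective f, at_most_one_fixpoint f & N \subset fun_arcs f].
  by exists f; split=> //; apply: subset_trans sNf.
apply: partial_injection_fun => // u v; rewrite !inE => uS vT.
apply/eqP; apply: contraT => uv.
have uvN : (u, v) \notin N by apply: contra uS => uvN; apply/sourcesP; exists v.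
have : #|(u, v) |: N| <= #|N|.
  apply: maxN; rewrite inE partial_injection_setU1 //.
  by rewrite (subset_trans sMN) ?subsetUr.
by rewrite cardsU1 uvN add1n ltnn.
Qed.

End PartialInjections.

Section Minimality.
Variable T : finType.
Implicit Types (D : {set T * T}) (f : T -> T).

Lemma lambdak2_ge_compl_fun_arcs f D : injective f -> 2 <= #|T| ->
  compl_fun_arcs setT f \subset D -> #|T| - 2 <= lambdak D 2.
Proof.
move=> f_inj nT sfD; apply: lambdak_ge => [|S /eqP/cards2P[x [y [xy ->]]]].
  by rewrite expnS expn1; nia.
apply: lambdaS_ge; first by rewrite expnS expn1; nia.
apply: packingS sfD _; apply: packing_compl_fun_arcs; rewrite ?in_setT //.
- by rewrite cardsT; lia.
- by split=> // u v _ _; apply: f_inj.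
Qed.

Lemma outdeg_compl D u : loopless D ->
  outdeg (complete_arcs T :\: D) u = #|T| - (outdeg D u).+1.
Proof.
move=> /subsetP lD; rewrite /outdeg.
have -> : [set v | (u, v) \in complete_arcs T :\: D] = ~: (u |: [set v | (u, v) \in D]).
  by apply/setP=> v; rewrite !inE negb_or andbC eq_sym.
have uD : (u, u) \notin D by apply/negP=> /lD; rewrite inE eqxx.
by have := cardsC (u |: [set v | (u, v) \in D]); rewrite cardsU1 inE uD; lia.
Qed.

Lemma indeg_compl D v : loopless D ->
  indeg (complete_arcs T :\: D) v = #|T| - (indeg D v).+1.
Proof.
move=> /subsetP lD; rewrite /indeg.
have -> : [set u | (u, v) \in complete_arcs T :\: D] = ~: (v |: [set u | (u, v) \in D]).
  by apply/setP=> u; rewrite !inE negb_or andbC.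
have vD : (v, v) \notin D by apply/negP=> /lD; rewrite inE eqxx.
by have := cardsC (v |: [set u | (u, v) \in D]); rewrite cardsU1 inE vD; lia.
Qed.

Lemma card_sub_setC3 (A : {set T}) a b c : a != b -> a != c -> b != c ->
  A \subset ~: [set a; b; c] -> #|A| < #|T| - 2.
Proof.
move=> ab ac bc /subset_leq_card; have := cardsC [set a; b; c].
by rewrite setUC cardsU1 cards2 !inE negb_or !(eq_sym c) ab ac bc; lia.
Qed.

Lemma minimal_compl_fun_arcs f : injective f -> at_most_one_fixpoint f -> 2 <= #|T| ->
  minimally_strong_arc_conn (complete_arcs T :\: fun_arcs f) 2 (#|T| - 2).
Proof.
move=> f_inj f1 nT; rewrite compl_fun_arcsT.
split=> [|[u v]]; first exact: lambdak2_ge_compl_fun_arcs f_inj nT (subxx _).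
rewrite in_compl_fun_arcs !in_setT /= => /andP[uv fuv].
set D' := compl_fun_arcs setT f :\ (u, v).
case: (eqVneq (f u) u) => fu.
  have fv : f v != v by apply: contraNneq uv => fv; rewrite (f1 u v fu fv).
  have [q _ fq] : exists2 q, q \in setT & f q = v.
    by apply: permutes_preimage (in_setT v); split=> // ? ? _ _ /f_inj.
  have vq : v != q by apply: contraNneq fv => vq; rewrite {1}vq fq.
  have qu : q != u by apply: contraNneq fuv => qu; rewrite -fq qu.
  have vu : v != u by rewrite eq_sym.
  apply: leq_ltn_trans (proj2 (lambdak2_le_deg D' v nT)) _.
  apply: (card_sub_setC3 vq vu qu); apply/subsetP=> w.
  rewrite !inE /= => /and3P[wuv wv fwv]; rewrite !negb_or wv /=; apply/andP; split.
    by apply: contraNneq fwv => ->; rewrite fq.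
  by apply: contraNneq wuv => ->.
apply: leq_ltn_trans (proj1 (lambdak2_le_deg D' u nT)) _.
apply: (card_sub_setC3 (b := f u) (c := v) _ uv fuv); first by rewrite eq_sym.
apply/subsetP=> w; rewrite !inE /= => /and3P[wuv uw fuw].
rewrite !negb_or eq_sym uw (eq_sym w) fuw /=.
by apply: contraNneq wuv => ->.
Qed.

Lemma minimal_eq_compl_fun_arcs D : 2 <= #|T| -> loopless D ->
  minimally_strong_arc_conn D 2 (#|T| - 2) ->
  exists f, [/\ injective f, at_most_one_fixpoint f & D = complete_arcs T :\: fun_arcs f].
Proof.
move=> nT lD [lambdaD minD]; pose M := complete_arcs T :\: D.
have pM : partial_injection M.
  apply/and3P; split; first exact: subsetDl.
    apply/forallP=> u; rewrite outdeg_compl //.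
    by have [outD _] := lambdak2_le_deg D u nT; lia.
  apply/forallP=> v; rewrite indeg_compl //.
  by have [_ inD] := lambdak2_le_deg D v nT; lia.
have [f [f_inj f1 sMf]] := partial_injection_extend pM.
have sfM : fun_arcs f \subset M.
  apply/subsetP=> e ef; apply: contraT => eM.
  have ec : e \in complete_arcs T by move: ef; rewrite !inE => /andP[].
  have eD : e \in D by move: eM; rewrite inE ec andbT negbK.
  have := minD e eD; rewrite ltnNge => /negP[].
  apply: lambdak2_ge_compl_fun_arcs f_inj nT _; rewrite -compl_fun_arcsT.
  apply/subsetP=> p /setDP[pc pf]; rewrite in_setD1; apply/andP; split.
    by apply: contraNneq pf => ->.
  by apply: contraNT pf => pD; apply: (subsetP sMf); rewrite inE pD.
exists f; split=> //; have <- : M = fun_arcs f by apply/eqP; rewrite eqEsubset sMf.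
apply/setP=> p; rewrite !inE negb_and negbK.
case: (boolP (p \in D)) => [pD | _]; last by case: (_ != _).
by have := subsetP lD p pD; rewrite inE => ->.
Qed.

End Minimality.

Theorem theorem5p2 (T : finType) (D : {set T * T}) :
  2 <= #|T| -> loopless D ->
  minimally_strong_arc_conn D 2 (#|T| - 2) <->
  exists M : {set T * T},
    D = complete_arcs T :\: M /\ disjoint_cycles_cover_but_one M.
Proof.
move=> nT lD; split.
  case/(minimal_eq_compl_fun_arcs nT lD)=> f [f_inj f1 ->].
  have [C [sizeC uniqC fC cover]] := fun_arcs_cycles f_inj f1.
  by exists (fun_arcs f); split=> //; exists C.
case=> M [-> [C [sizeC uniqC -> cover]]].
have [f [f_inj f1 ->]] := cycles_arcs_fun sizeC uniqC cover.
exact: minimal_compl_fun_arcs.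
Qed.
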